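(* Let $b\ge 1$ be an integer and let $c\in\mathbb{R}$ be a fixed critical value (depending only on $b$, not on $l$). For each integer $l\ge 1$ let $D_1(l),\dots,D_b(l)$ be real random variables on a probability space with probability measure $\mathbb{P}$, where $\mathbb{P}$ is the distribution under which the alternative hypothesis $H_{1j}$ for the fixed candidate feature $f_j$ holds. Assume: (A1) almost surely, $D_i(l+1)\le D_i(l)$ for all $i\in\{1,\dots,b\}$ and all $l\ge 1$; (A2) almost surely, for every $l$, all $D_i(l)$ are nonzero and the absolute values $|D_1(l)|,\dots,|D_b(l)|$ are pairwise distinct. Let $T^+(l)=\sum_{i=1}^b R_i(l)\,\mathbf{1}\{D_i(l)>0\}$, where $R_i(l)$ is the rank of $|D_i(l)|$ among $\{|D_1(l)|,\dots,|D_b(l)|\}$ (rank $1$ for the smallest). Define the power $\beta_j(l)=\mathbb{P}\big(T^+(l)\ge c\big)$. Then for every $l\ge 1$, \[\beta_j(l+1)\le \beta_j(l).\]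
   Context: Setting: a response $Y$ and candidate features $f_1,\dots,f_p$; the data are augmented with $l$ synthetic noise features $\varepsilon_1,\dots,\varepsilon_l$ drawn i.i.d. from a fixed distribution. For bootstrap replicate $i=1,\dots,b$, $I^{(i)}_j(l)$ is the importance score of $f_j$ and $I^{(i)}(\varepsilon_k;l)$ that of the $k$-th noise feature when $l$ noise features are included; $M^{(i)}(l)=\max_{1\le k\le l} I^{(i)}(\varepsilon_k;l)$ and $D_i(l)=I^{(i)}_j(l)-M^{(i)}(l)$. $T^+(l)$ is the one-sided Wilcoxon signed-rank statistic computed from $\{D_i(l)\}_{i=1}^b$, and the test rejects $H_{0j}: Y\perp\!\!\!\perp f_j$ in favor of $H_{1j}: Y\not\perp\!\!\!\perp f_j$ when $T^+(l)\ge c$, with $c=c_\alpha(b)$ the Wilcoxon critical value at level $\alpha$. *)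

From HB Require Import structures.
From mathcomp Require Import all_boot all_order all_algebra.
From mathcomp Require Import all_classical all_reals all_analysis.
Set Implicit Arguments. Unset Strict Implicit. Unset Printing Implicit Defensive.
Import Order.TTheory GRing.Theory Num.Theory.
Local Open Scope ring_scope.

(* Rank of |x i| among |x 0|, ..., |x (b-1)| (rank 1 = smallest; with
   pairwise distinct absolute values this is the usual rank). *)
Definition abs_rank (R : realType) (b : nat) (x : 'I_b -> R) (i : 'I_b) : nat :=
  #|[set k : 'I_b | `|x k| <= `|x i|]|.

Definition wilcoxon_Tplus (R : realType) (b : nat) (x : 'I_b -> R) : R :=
  \sum_(i < b) (abs_rank x i)%:R * (if 0 < x i then 1 else 0).

(* The signed-rank statistic counts positive Walsh averages,
   2 T^+(x) = #{(i, k) | x_i + x_k > 0} + #{i | x_i > 0},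
   as soon as the |x_i| are pairwise distinct: writing R_i as the number of k
   with |x_k| <= |x_i|, an off-diagonal pair {i, k} contributes 1{x_j > 0} for
   the j of larger absolute value, and the sign of x_j is that of x_i + x_k.
   The right-hand side is plainly nondecreasing in x, so T^+(D(l+1)) <= T^+(D(l))
   almost surely and the event {T^+ >= c} can only shrink, up to a null set. *)
From HB Require Import structures.
From mathcomp Require Import all_boot all_order all_algebra.
From mathcomp Require Import all_classical all_reals all_analysis.
From mathcomp Require Import lra measurable_realfun.
Set Implicit Arguments. Unset Strict Implicit. Unset Printing Implicit Defensive.
Import Order.TTheory GRing.Theory Num.Theory.
Local Open Scope ring_scope.

Section SignedRank.
Variables (R : realType) (b : nat).
Implicit Types (x y : 'I_b -> R) (a c : R).

Lemma wilcoxon_TplusE x : wilcoxon_Tplus x =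
  \sum_(i < b) \sum_(k < b) (`|x k| <= `|x i|)%R%:R * (0 < x i)%R%:R.
Proof.
apply: eq_bigr => i _; rewrite -big_distrl /=; congr (_ * _); last by case: ifP.
rewrite /abs_rank -sum1_card natr_sum big_mkcond /=.
by apply: eq_bigr => k _; rewrite inE; case: ifP.
Qed.

Lemma addr_gt0_norm_ltr a c : `|c| < `|a| -> (0 < a + c) = (0 < a).
Proof.
have [a_gt0|a_le0] := ltrP 0 a.
  by rewrite (gtr0_norm a_gt0) ltr_norml => /andP[? ?]; apply/idP; lra.
rewrite (ler0_norm a_le0) ltr_norml => /andP[? ?].
by apply/negbTE; rewrite -leNgt; lra.
Qed.

Lemma signed_rank_pair a c : `|a| != `|c| ->
  (`|c| <= `|a|)%R%:R * (0 < a)%R%:R + (`|a| <= `|c|)%R%:R * (0 < c)%R%:R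
  = (0 < a + c)%R%:R :> R.
Proof.
move=> neq_ac; have [lt_ca|lt_ac|eq_ca] := ltrgtP `|c| `|a|.
- by rewrite addr_gt0_norm_ltr // mul1r mul0r addr0.
- by rewrite [a + c]addrC addr_gt0_norm_ltr // mul1r mul0r add0r.
- by rewrite eq_ca eqxx in neq_ac.
Qed.

(* Twice the number of positive Walsh averages (x_i + x_k) / 2, i <= k. *)
Definition walsh_count x : R :=
  \sum_(i < b) \sum_(k < b) (0 < x i + x k)%R%:R + \sum_(i < b) (0 < x i)%R%:R.

Lemma walsh_count_le x y : (forall i, y i <= x i) -> walsh_count y <= walsh_count x.
Proof.
have ler_nat_bool (p q : bool) : (p -> q) -> p%:R <= q%:R :> R.
  by case: p; case: q => // /(_ isT).
move=> le_yx; apply: lerD; apply: ler_sum => i _.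
  apply: ler_sum => k _; apply: ler_nat_bool => /lt_le_trans; apply.
  exact: lerD.
by apply: ler_nat_bool => /lt_le_trans; apply.
Qed.

Lemma wilcoxon_Tplus_walsh x : (forall i k, i != k -> `|x i| != `|x k|) ->
  wilcoxon_Tplus x *+ 2 = walsh_count x.
Proof.
move=> x_inj; rewrite mulr2n {1}wilcoxon_TplusE wilcoxon_TplusE.
rewrite [X in _ + X]exchange_big -big_split /=.
have diag i : \sum_(k < b) ((i == k) && (0 < x i))%R%:R = (0 < x i)%R%:R :> R.
  rewrite (bigD1 i) //= eqxx big1 ?addr0 // => k.
  by rewrite eq_sym => /negbTE->.
rewrite /walsh_count -[in RHS](eq_bigr _ (fun i _ => diag i)) -big_split /=.
apply: eq_bigr => i _; rewrite -!big_split /=; apply: eq_bigr => k _.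
have [<-|/x_inj/signed_rank_pair->] := eqVneq i k; last by rewrite addr0.
by rewrite lexx mul1r -mulr2n -[x i + x i]mulr2n pmulrn_lgt0.
Qed.

Lemma wilcoxon_Tplus_le x y :
  (forall i k, i != k -> `|x i| != `|x k|) ->
  (forall i k, i != k -> `|y i| != `|y k|) ->
  (forall i, y i <= x i) -> wilcoxon_Tplus y <= wilcoxon_Tplus x.
Proof.
move=> x_inj y_inj le_yx; rewrite -(@ler_pMn2r _ 2) //.
by rewrite !wilcoxon_Tplus_walsh //; apply: walsh_count_le.
Qed.

End SignedRank.

Lemma measurable_wilcoxon_Tplus (R : realType) (d : measure_display)
    (T : measurableType d) (b : nat) (X : 'I_b -> T -> R) :
  (forall i, measurable_fun setT (X i)) ->
  measurable_fun setT (fun w => wilcoxon_Tplus (X ^~ w)).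
Proof.
move=> mX; have mbool (f : T -> bool) : measurable_fun setT f ->
    measurable_fun setT (fun w => (f w)%:R : R).
  by move=> mf; apply: (measurableT_comp (f := fun e : bool => e%:R : R)) mf.
under eq_fun do rewrite wilcoxon_TplusE.
apply: measurable_sum => i; apply: measurable_sum => k; apply: measurable_funM.
- by apply/mbool/measurable_fun_ler; apply: measurableT_comp.
- exact/mbool/measurable_fun_ltr.
Qed.

Lemma le_measure_ae (R : realType) (d : measure_display) (T : measurableType d)
    (mu : {measure set T -> \bar R}) (A B : set T) :
  measurable A -> measurable B -> {ae mu, forall w, A w -> B w} ->
  (mu A <= mu B)%E.
Proof.
move=> mA mB [N [mN muN0 AB_N]].
have sub_ABN : (A `<=` B `|` N)%classic.
  move=> w Aw; have [Bw|nBw] := pselect (B w); first by left.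
  by right; apply: AB_N => /(_ Aw).
rewrite -(measureU0 mB mN muN0).
by apply: le_measure => //; rewrite inE //; apply: measurableU.
Qed.

Local Open Scope classical_set_scope.

Theorem proposition5p2 (R : realType) (d : measure_display) (Omega : measurableType d)
  (P : probability Omega R) (b : nat) (c : R)
  (D : nat -> 'I_b -> Omega -> R) :
  (0 < b)%N ->
  (forall l i, (1 <= l)%N -> measurable_fun setT (D l i)) ->
  {ae P, forall w, forall l (i : 'I_b), (1 <= l)%N -> D l.+1 i w <= D l i w} ->
  {ae P, forall w, forall l, (1 <= l)%N ->
      (forall i, D l i w != 0) /\
      (forall i k : 'I_b, i != k -> `|D l i w| != `|D l k w|)} ->
  forall l, (1 <= l)%N ->
    (P [set w | (c <= wilcoxon_Tplus (fun i => D l.+1 i w))%R] <=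
     P [set w | (c <= wilcoxon_Tplus (fun i => D l i w))%R])%E.
Proof.
move=> _ mD D_mono D_distinct l l_ge1.
have m_level m : (1 <= m)%N ->
    measurable [set w | c <= wilcoxon_Tplus (fun i => D m i w)].
  move=> m_ge1; rewrite -[X in measurable X]setTI.
  apply: measurable_fun_le => //.
  by apply: measurable_wilcoxon_Tplus => i; apply: mD.
apply: le_measure_ae; [exact: m_level | exact: m_level |].
apply: filterS2 D_mono D_distinct => w mono distinct /le_trans; apply.
apply: wilcoxon_Tplus_le => [||i]; last exact: mono.
- by case: (distinct l l_ge1).
- by case: (distinct l.+1 isT).
Qed.
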